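(* Let $\mathcal{K}$ be a variety of languages such that every language in $\mathcal{K}$ has a syntactic algebra. A language $K$ belongs to $\mathcal{K}$ if, and only if, it is recognised by some algebra from the pseudo-variety $\mathcal{V}$ generated by the set $\mathcal{S}:=\{\mathrm{Syn}(K'):K'\in\mathcal{K}[\Sigma],\ \Sigma\text{ an alphabet}\}$.
   Context: Fix a set $\Xi$ of sorts; $\mathsf{Pos}^\Xi$: $\Xi$-sorted families of partial orders with sort-wise monotone maps. $\mathbb{M}$ is a monad on $\mathsf{Pos}^\Xi$ ($\mathrm{flat},\mathrm{sing}$) preserving injective, surjective, bijective functions and preimages and using the standard ordering (order on $\mathbb{M}A$ is $\{(\mathbb{M}p(u),\mathbb{M}q(u)):u\in\mathbb{M}R\}$, $R$ the order of $A$). $\mathbb{M}$-algebras $\langle A,\pi\rangle$: $\pi\circ\mathbb{M}\pi=\pi\circ\mathrm{flat}$, $\pi\circ\mathrm{sing}=\mathrm{id}$; morphisms commute with products. Finitary: sort-wise finite and finitely generated. Quotient of $\mathfrak{B}$: codomain of a surjective morphism from $\mathfrak{B}$. For $\Delta\subseteq\Xi$: $A|_\Delta$ the part with sorts in $\Delta$, $\mathbb{M}|_\Delta A:=(\mathbb{M}(A|_\Delta))|_\Delta$, $\mathfrak{A}|_\Delta$ the $\mathbb{M}|_\Delta$-algebra on $A|_\Delta$ with restricted product. $\mathfrak{B}$ is a sort-accumulation point of $\mathcal{A}$ if for every finite $\Delta\subseteq\Xi$ there is $\mathfrak{A}\in\mathcal{A}$ with $\mathfrak{B}|_\Delta$ a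 quotient of $\mathfrak{A}|_\Delta$. A pseudo-variety is a class of finitary algebras closed under quotients, finitary subalgebras of finite products and sort-accumulation points; the pseudo-variety generated by a set is the smallest pseudo-variety containing it. An alphabet is a finite unordered set $\Sigma$; a language is $K\subseteq\mathbb{M}_\xi\Sigma$; $\mathfrak{A}$ recognises $K$ if $K=\varphi^{-1}[P]$ for a morphism $\varphi:\mathbb{M}\Sigma\to\mathfrak{A}$ and upwards closed $P\subseteq A_\xi$. Contexts with hole of sort $\zeta$: $p\in\mathbb{M}(\Sigma+\{\Box\})$; $p[s]$ the image of $p$ under the algebra morphism extending $\Box\mapsto s$, $c\mapsto\mathrm{sing}(c)$; $p^{-1}[K]=\{s:p[s]\in K\}$. Syntactic congruence $s\preceq_K t$ ($s,t$ of sort $\zeta$) iff $p[s]\in K\Rightarrow p[t]\in K$ for all contexts $p\in\mathbb{M}_\xi(\Sigma+\{\Box\})$ with hole of sort $\zeta$. $K$ has a syntactic algebra if $\preceq_K$ is a congruence ordering (i.e. $\mathbb{M}q(s)\leq\mathbb{M}q(t)\Rightarrow\pi(s)\preceq_K\pi(t)$, $q$ the quotient map onto the ordered set of classes) with sort-wise finite quotient; $\mathrm{Syn}(K)$ is the quotient algebra $\mathbb{M}\Sigma/{\preceq_K}$ (product given by $\pi\circ\mathbb{M}q=q\circ\pi$). A variety of languages is a family $\mathcal{K}$ assigning to each alphabet $\Sigma$ a class $\mathcal{K}[\Sigma]$ of languages over $\Sigma$ closed under finite unions and intersections, inverse morphisms ($\psi^{-1}[K]$ for algebra morphisms $\psi:\mathbb{M}\Sigma\to\mathbb{M}\Gamma$)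 and derivatives $p^{-1}[K]$. *)

From Stdlib Require Import List ProofIrrelevance.
Import ListNotations.

Set Implicit Arguments.
Unset Strict Implicit.

Section Theory.
Variable Xi : Type.

Record SPos := {
  car :> Xi -> Type;
  le : forall x, car x -> car x -> Prop;
  le_refl : forall x (a : car x), le a a;
  le_trans : forall x (a b c : car x), le a b -> le b c -> le a c;
  le_antisym : forall x (a b : car x), le a b -> le b a -> a = b }.
Arguments le : clear implicits.
Arguments le_refl {s x} a.
Arguments le_trans {s x a b c}.
Arguments le_antisym {s x a b}.

Record Hom (A B : SPos) := {
  hfun :> forall x, A x -> B x;
  hmono : forall x a b, le A x a b -> le B x (hfun a) (hfun b) }.
Arguments hfun {A B} h x _.
Arguments hmono {A B} h {x a b}.

Definition injectiveH (A B : SPos) (f : Hom A B) : Prop :=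
  forall x a b, f x a = f x b -> a = b.
Definition surjectiveH (A B : SPos) (f : Hom A B) : Prop :=
  forall x b, exists a, f x a = b.
Definition bijectiveH (A B : SPos) (f : Hom A B) : Prop :=
  injectiveH f /\ surjectiveH f.

Definition sub (A : SPos) (P : forall x, A x -> Prop) : SPos.
Proof.
  refine {| car := fun x => {a : A x | P x a};
            le := fun x a b => le A x (proj1_sig a) (proj1_sig b) |}.
  - intros x a; apply le_refl.
  - intros x a b c; apply le_trans.
  - intros x [a pa] [b pb] H1 H2; simpl in *.
    pose proof (le_antisym H1 H2); subst; f_equal; apply proof_irrelevance.
Defined.
Arguments sub : clear implicits.

Definition incl {A : SPos} (P : forall x, A x -> Prop) : Hom (sub A P) A.
Proof.
  refine (@Build_Hom (sub A P) A (fun x (a : {a : A x | P x a}) => proj1_sig a) _).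
  intros x a b H; exact H.
Defined.

Definition prodP (A B : SPos) : SPos.
Proof.
  refine {| car := fun x => (A x * B x)%type;
            le := fun x p q => le A x (fst p) (fst q) /\ le B x (snd p) (snd q) |}.
  - intros x [a b]; split; apply le_refl.
  - intros x [a b] [c d] [e f] [H1 H2] [H3 H4]; split; eapply le_trans; eauto.
  - intros x [a b] [c d] [H1 H2] [H3 H4]; simpl in *.
    rewrite (le_antisym H1 H3), (le_antisym H2 H4); reflexivity.
Defined.

Definition ordrel (A : SPos) : SPos :=
  sub (prodP A A) (fun x p => le A x (fst p) (snd p)).

Definition ordp1 (A : SPos) : Hom (ordrel A) A.
Proof.
  refine (@Build_Hom (ordrel A) A (fun x (p : {p : (A x * A x)%type | le A x (fst p) (snd p)}) => fst (proj1_sig p)) _).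
  intros x a b [H _]; exact H.
Defined.

Definition ordp2 (A : SPos) : Hom (ordrel A) A.
Proof.
  refine (@Build_Hom (ordrel A) A (fun x (p : {p : (A x * A x)%type | le A x (fst p) (snd p)}) => snd (proj1_sig p)) _).
  intros x a b [_ H]; exact H.
Defined.

Definition preimP (A B : SPos) (f : Hom A B) (C : forall x, B x -> Prop) :
  forall x, A x -> Prop := fun x a => C x (f x a).

Record Monad := {
  Mo : SPos -> SPos;
  Mf : forall A B : SPos, Hom A B -> Hom (Mo A) (Mo B);
  sing : forall A : SPos, Hom A (Mo A);
  flat : forall A : SPos, Hom (Mo (Mo A)) (Mo A);
  Mf_ext : forall A B (f g : Hom A B), (forall x a, f x a = g x a) ->
           forall x u, Mf f x u = Mf g x u;
  Mf_id : forall (A : SPos) (f : Hom A A), (forall x a, f x a = a) ->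
           forall x u, Mf f x u = u;
  Mf_comp : forall A B C (f : Hom A B) (g : Hom B C) (h : Hom A C),
           (forall x a, h x a = g x (f x a)) ->
           forall x u, Mf h x u = Mf g x (Mf f x u);
  sing_nat : forall A B (f : Hom A B) x a, Mf f x (sing A x a) = sing B x (f x a);
  flat_nat : forall A B (f : Hom A B) x u,
           Mf f x (flat A x u) = flat B x (Mf (Mf f) x u);
  flat_sing : forall A x u, flat A x (sing (Mo A) x u) = u;
  flat_Msing : forall A x u, flat A x (Mf (sing A) x u) = u;
  flat_flat : forall A x u, flat A x (flat (Mo A) x u) = flat A x (Mf (flat A) x u);
  M_inj : forall A B (f : Hom A B), injectiveH f -> injectiveH (Mf f);
  M_surj : forall A B (f : Hom A B), surjectiveH f -> surjectiveH (Mf f);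
  M_bij : forall A B (f : Hom A B), bijectiveH f -> bijectiveH (Mf f);
  M_preim : forall A B (f : Hom A B) (C : forall x, B x -> Prop) x (u : Mo A x),
      (exists v : Mo (sub A (preimP f C)) x, Mf (incl (preimP f C)) x v = u) <->
      (exists w : Mo (sub B C) x, Mf (incl C) x w = Mf f x u);
  M_order : forall (A : SPos) x (a b : Mo A x),
      le (Mo A) x a b <->
      exists u : Mo (ordrel A) x, Mf (ordp1 A) x u = a /\ Mf (ordp2 A) x u = b }.

Variable M : Monad.

Record Alg := {
  acar : SPos;
  act : Hom (Mo M acar) acar;
  act_flat : forall x u, act x (Mf M act x u) = act x (flat M acar x u);
  act_sing : forall x a, act x (sing M acar x a) = a }.

Definition is_morph (A B : SPos) (piA : Hom (Mo M A) A) (piB : Hom (Mo M B) B)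
  (f : Hom A B) : Prop :=
  forall x u, f x (piA x u) = piB x (Mf M f x u).

Definition morph (A B : Alg) (f : Hom (acar A) (acar B)) : Prop :=
  is_morph (act A) (act B) f.

Definition sortwise_finite (A : SPos) : Prop :=
  forall x, exists l : list (A x), forall a, In a l.

Definition gen_pred (A : SPos) (l : list {x : Xi & A x}) : forall x, A x -> Prop :=
  fun x a => In (existT _ x a) l.

Definition finitely_generated (A : Alg) : Prop :=
  exists l : list {x : Xi & acar A x},
    forall x a, exists u : Mo M (sub (acar A) (gen_pred l)) x,
      act A x (Mf M (incl (gen_pred l)) x u) = a.

Definition finitary (A : Alg) : Prop :=
  sortwise_finite (acar A) /\ finitely_generated A.

Definition is_quotient (B A : Alg) : Prop :=
  exists f : Hom (acar A) (acar B), morph f /\ surjectiveH f.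

(** restriction to a set of sorts Delta: the part A|_Delta, viewed inside Pos^Xi
    as the sub-poset with empty components outside Delta *)
Definition inD (Delta : list Xi) (A : SPos) : forall x, A x -> Prop :=
  fun x _ => In x Delta.

Definition liftD (Delta : list Xi) (A B : SPos)
  (phi : forall x, In x Delta -> A x -> B x)
  (mono : forall x (h : In x Delta) a b, le A x a b -> le B x (phi x h a) (phi x h b)) :
  Hom (sub A (inD Delta (A:=A))) (sub B (inD Delta (A:=B))).
Proof.
  refine (@Build_Hom (sub A (inD Delta (A:=A))) (sub B (inD Delta (A:=B)))
    (fun x (a : {a : A x | In x Delta}) =>
       (exist (fun _ : B x => In x Delta) (phi x (proj2_sig a) (proj1_sig a)) (proj2_sig a))) _).
  intros x [a ha] [b hb] H; simpl in *.
  rewrite (proof_irrelevance _ hb ha); apply mono; exact H.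
Defined.

(** B|_Delta is a quotient of A|_Delta as M|_Delta-algebras (with restricted products) *)
Definition restr_quotient (Delta : list Xi) (B A : Alg) : Prop :=
  exists (phi : forall x, In x Delta -> acar A x -> acar B x)
         (mono : forall x (h : In x Delta) a b,
                 le (acar A) x a b -> le (acar B) x (phi x h a) (phi x h b)),
    (forall x (h : In x Delta) b, exists a, phi x h a = b) /\
    (forall x (h : In x Delta) (u : Mo M (sub (acar A) (inD Delta (A:=acar A))) x),
        phi x h (act A x (Mf M (incl (inD Delta (A:=acar A))) x u)) =
        act B x (Mf M (incl (inD Delta (A:=acar B))) x (Mf M (liftD mono) x u))).

Definition sort_accumulation_point (C : Alg -> Prop) (B : Alg) : Prop :=
  forall Delta : list Xi, exists A, C A /\ restr_quotient Delta B A.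

(** B is (isomorphic to) a subalgebra of the finite product of the family F:
    there are morphisms B -> F i which jointly form an order-embedding into the
    product (the canonical map into the product is injective and reflects order) *)
Definition sub_of_finite_product (I : Type) (F : I -> Alg) (B : Alg) : Prop :=
  exists h : forall i, Hom (acar B) (acar (F i)),
    (forall i, morph (h i)) /\
    (forall x a b, (forall i, le (acar (F i)) x (h i x a) (h i x b)) ->
                   le (acar B) x a b).

Definition pseudo_variety (C : Alg -> Prop) : Prop :=
  (forall A, C A -> finitary A) /\
  (forall A B, C A -> finitary B -> is_quotient B A -> C B) /\
  (forall (I : Type) (l : list I) (F : I -> Alg) (B : Alg),
      (forall i, In i l) -> (forall i, C (F i)) -> finitary B ->
      sub_of_finite_product F B -> C B) /\
  (forall B, finitary B -> sort_accumulation_point C B -> C B).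

Definition in_generated_pv (S : Alg -> Prop) (A : Alg) : Prop :=
  forall C, pseudo_variety C -> (forall B, S B -> C B) -> C A.

Record Alphabet := {
  alet :> Xi -> Type;
  afin : exists l : list {x : Xi & alet x}, forall a, In a l }.

Definition disc (T : Xi -> Type) : SPos.
Proof.
  refine {| car := T; le := fun x a b => a = b |}.
  - reflexivity.
  - intros; subst; reflexivity.
  - intros; assumption.
Defined.

Definition free (S : Alphabet) : SPos := Mo M (disc S).

Definition lang (S : Alphabet) : Type := {xi : Xi & free S xi -> Prop}.

Definition free_morph (S T : Alphabet) (psi : Hom (free S) (free T)) : Prop :=
  is_morph (flat M (disc S)) (flat M (disc T)) psi.

Definition recognises (A : Alg) (S : Alphabet) (K : lang S) : Prop :=
  exists phi : Hom (free S) (acar A),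
    is_morph (flat M (disc S)) (act A) phi /\
    exists P : acar A (projT1 K) -> Prop,
      (forall a b, le (acar A) _ a b -> P a -> P b) /\
      (forall s, projT2 K s <-> P (phi _ s)).

(** contexts: S + {box}, box of sort zeta *)
Definition SBox (S : Alphabet) (zeta : Xi) : SPos :=
  disc (fun x => (S x + (x = zeta))%type).

Definition plugH (S : Alphabet) (zeta : Xi) (s : free S zeta) : Hom (SBox S zeta) (free S).
Proof.
  refine (@Build_Hom (SBox S zeta) (free S) (fun x (c : (S x + (x = zeta))%type) =>
     match c with
     | inl a => sing M (disc S) x a
     | inr e => match eq_sym e in _ = y return free S y with eq_refl => s end
     end) _).
  intros x a b H; simpl in H; subst; apply le_refl.
Defined.

Definition plug (S : Alphabet) (zeta xi : Xi) (p : Mo M (SBox S zeta) xi) (s : free S zeta)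
  : free S xi :=
  flat M (disc S) xi (Mf M (plugH s) xi p).

Definition synle (S : Alphabet) (K : lang S) (zeta : Xi) (s t : free S zeta) : Prop :=
  forall p : Mo M (SBox S zeta) (projT1 K), projT2 K (plug p s) -> projT2 K (plug p t).

(** K has a syntactic algebra: <=_K is a congruence ordering with sort-wise finite
    quotient.  The quotient (ordered set of classes) is given up to isomorphism by a
    surjective monotone q : M S -> Q with q s <= q t <-> s <=_K t. *)
Definition has_syntactic_algebra (S : Alphabet) (K : lang S) : Prop :=
  exists (Q : SPos) (q : Hom (free S) Q),
    surjectiveH q /\
    (forall x s t, le Q x (q x s) (q x t) <-> synle K s t) /\
    sortwise_finite Q /\
    (forall x (s t : Mo M (free S) x),
        le (Mo M Q) x (Mf M q x s) (Mf M q x t) ->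
        synle K (flat M (disc S) x s) (flat M (disc S) x t)).

Definition is_syntactic_algebra (S : Alphabet) (K : lang S) (A : Alg) : Prop :=
  exists q : Hom (free S) (acar A),
    is_morph (flat M (disc S)) (act A) q /\ surjectiveH q /\
    (forall x s t, le (acar A) x (q x s) (q x t) <-> synle K s t).

Definition lang_variety (KK : forall S : Alphabet, lang S -> Prop) : Prop :=
  (forall S xi, KK S (existT _ xi (fun _ => False))) /\
  (forall S xi, KK S (existT _ xi (fun _ => True))) /\
  (forall S xi (K1 K2 : free S xi -> Prop),
      KK S (existT _ xi K1) -> KK S (existT _ xi K2) ->
      KK S (existT _ xi (fun s => K1 s \/ K2 s))) /\
  (forall S xi (K1 K2 : free S xi -> Prop),
      KK S (existT _ xi K1) -> KK S (existT _ xi K2) ->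
      KK S (existT _ xi (fun s => K1 s /\ K2 s))) /\
  (forall S T (psi : Hom (free S) (free T)), free_morph psi ->
      forall xi (K : free T xi -> Prop), KK T (existT _ xi K) ->
      KK S (existT _ xi (fun s => K (psi xi s)))) /\
  (forall S xi zeta (K : free S xi -> Prop) (p : Mo M (SBox S zeta) xi),
      KK S (existT _ xi K) ->
      KK S (existT _ zeta (fun s => K (plug p s)))).

End Theory.

From Pilot Require Import Defs.
From Stdlib Require Import List Classical ClassicalEpsilon.
From Stdlib Require Import FunctionalExtensionality PropExtensionality.

(* If K is in the variety, Syn(K) is one of the generators and recognises K.
   Conversely, the finitary algebras all of whose recognised languages lie in
   the variety form a pseudo-variety containing every Syn(K'), so they contain
   the generated pseudo-variety.  A language recognised by Syn(K') is the
   preimage, along a morphism of free algebras, of a finite union of upsets of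
   syntactic classes, and each such upset is a finite intersection of
   derivatives of K'.  Subalgebras of finite products are handled by finite
   intersections, and a sort-accumulation point only has to be matched on the
   finitely many sorts of an alphabet and a language. *)

Section Algebra.
Context {Xi : Type} {M : Monad Xi}.

Definition hcomp {A B C : SPos Xi} (f : Hom A B) (g : Hom B C) : Hom A C :=
  @Build_Hom Xi A C (fun x a => g x (f x a)) (fun x a b H => hmono g (hmono f H)).

Definition disc_hom {T : Xi -> Type} {B : SPos Xi} (f : forall x, T x -> B x) :
  Hom (disc T) B.
Proof.
  refine (@Build_Hom Xi (disc T) B f _).
  intros x a b H; simpl in H; subst; apply le_refl.
Defined.

Lemma disc_hom_choice (T : Xi -> Type) (B : SPos Xi) (R : forall x, T x -> B x -> Prop) :
  (forall x a, exists b, R x a b) -> exists g : Hom (disc T) B, forall x a, R x a (g x a).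
Proof.
  intro H.
  exists (disc_hom (fun x a => proj1_sig (constructive_indefinite_description _ (H x a)))).
  intros x a; exact (proj2_sig (constructive_indefinite_description _ (H x a))).
Qed.

Lemma Mf_hcomp {A B C : SPos Xi} (f : Hom A B) (g : Hom B C) x u :
  Mf M (hcomp f g) x u = Mf M g x (Mf M f x u).
Proof. apply Mf_comp; reflexivity. Qed.

Lemma is_morph_hcomp {A B C : SPos Xi} (pA : Hom (Mo M A) A) (pB : Hom (Mo M B) B)
  (pC : Hom (Mo M C) C) (f : Hom A B) (g : Hom B C) :
  is_morph pA pB f -> is_morph pB pC g -> is_morph pA pC (hcomp f g).
Proof. intros Hf Hg x u; simpl; rewrite Hf, Hg, Mf_hcomp; reflexivity. Qed.

Definition free_alg (S : Alphabet Xi) : Alg M :=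
  @Build_Alg Xi M (free M S) (flat M (disc S))
    (fun x u => eq_sym (flat_flat (m:=M) (A:=disc S) u))
    (fun x a => flat_sing (m:=M) (A:=disc S) a).

Lemma free_morph_letters {S : Alphabet Xi} {A : Alg M} {phi : Hom (free M S) (acar A)} :
  is_morph (flat M (disc S)) (act A) phi ->
  forall x u, phi x u = act A x (Mf M (hcomp (sing M (disc S)) phi) x u).
Proof.
  intros Hphi x u.
  rewrite <- (flat_Msing (m:=M) (A:=disc S) u) at 1.
  rewrite Hphi, Mf_hcomp; reflexivity.
Qed.

Lemma free_morph_eq {S : Alphabet Xi} {A : Alg M} {phi psi : Hom (free M S) (acar A)} :
  is_morph (flat M (disc S)) (act A) phi -> is_morph (flat M (disc S)) (act A) psi ->
  (forall x a, phi x (sing M (disc S) x a) = psi x (sing M (disc S) x a)) ->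
  forall x u, phi x u = psi x u.
Proof.
  intros Hphi Hpsi Heq x u.
  rewrite (free_morph_letters Hphi), (free_morph_letters Hpsi).
  f_equal; apply Mf_ext; exact Heq.
Qed.

Definition free_ext_hom {S : Alphabet Xi} (A : Alg M) (g : Hom (disc S) (acar A)) :
  Hom (free M S) (acar A) := hcomp (Mf M g) (act A).

Lemma free_ext_hom_morph {S : Alphabet Xi} (A : Alg M) (g : Hom (disc S) (acar A)) :
  is_morph (flat M (disc S)) (act A) (free_ext_hom A g).
Proof.
  intros x u; unfold free_ext_hom; simpl.
  rewrite flat_nat, <- act_flat, Mf_hcomp; reflexivity.
Qed.

Lemma free_ext_hom_sing {S : Alphabet Xi} (A : Alg M) (g : Hom (disc S) (acar A)) x a :
  free_ext_hom A g x (sing M (disc S) x a) = g x a.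
Proof. unfold free_ext_hom; simpl; rewrite sing_nat; apply act_sing. Qed.

Lemma free_lift_surj {S : Alphabet Xi} {A B : Alg M} {phi : Hom (free M S) (acar B)}
  {f : Hom (acar A) (acar B)} :
  is_morph (flat M (disc S)) (act B) phi -> morph f -> surjectiveH f ->
  exists phi' : Hom (free M S) (acar A),
    is_morph (flat M (disc S)) (act A) phi' /\ forall x u, f x (phi' x u) = phi x u.
Proof.
  intros Hphi Hf Hs.
  destruct (@disc_hom_choice S (acar A) (fun x a b => f x b = phi x (sing M (disc S) x a)))
    as [g Hg].
  { intros x a; apply Hs. }
  exists (free_ext_hom A g); split; [apply free_ext_hom_morph|].
  intros x u; change (hcomp (free_ext_hom A g) f x u = phi x u).
  revert x u; apply free_morph_eq; [|exact Hphi|].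
  - apply (is_morph_hcomp _ (act A)); [apply free_ext_hom_morph|exact Hf].
  - intros x a.
    change (f x (free_ext_hom A g x (sing M (disc S) x a)) = phi x (sing M (disc S) x a)).
    rewrite free_ext_hom_sing; apply Hg.
Qed.

Lemma finitely_generated_free_surj {S : Alphabet Xi} {B : Alg M} {q : Hom (free M S) (acar B)} :
  is_morph (flat M (disc S)) (act B) q -> surjectiveH q -> finitely_generated B.
Proof.
  intros Hq qs.
  destruct (afin S) as [ls Hls].
  set (gen := fun p : {x : Xi & S x} =>
         existT (fun x => acar B x) (projT1 p) (q (projT1 p) (sing M (disc S) _ (projT2 p)))).
  exists (map gen ls).
  assert (Hgen : forall x (a : S x), gen_pred (map gen ls) (q x (sing M (disc S) x a))).
  { intros x a; apply in_map_iff; exists (existT _ x a); auto. }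
  set (g := disc_hom (B := sub (gen_pred (map gen ls)))
              (fun x a => exist _ (q x (sing M (disc S) x a)) (Hgen x a))).
  intros x b; destruct (qs x b) as [s <-].
  exists (Mf M g x s).
  rewrite <- Mf_hcomp, (free_morph_letters Hq).
  f_equal; apply Mf_ext; reflexivity.
Qed.

Lemma recognises_quotient {A B : Alg M} {S : Alphabet Xi} {K : lang M S} :
  is_quotient B A -> recognises B K -> recognises A K.
Proof.
  intros [f [fm fs]] [phi [phim [P [Pup HP]]]].
  destruct (free_lift_surj phim fm fs) as [phi' [phi'm Hphi']].
  exists phi'; split; [exact phi'm|].
  exists (fun a => P (f _ a)); split.
  - intros a b Hab; apply Pup, (hmono f Hab).
  - intro s; rewrite HP, Hphi'; reflexivity.
Qed.

Lemma recognises_restr_quotient {Delta : list Xi} {A B : Alg M} {S : Alphabet Xi}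
  {K : lang M S} :
  In (projT1 K) Delta -> (forall x (a : S x), In x Delta) ->
  restr_quotient Delta B A -> recognises B K -> recognises A K.
Proof.
  intros HK HS [p [mono [ps pm]]] [phi [phim [P [Pup HP]]]].
  destruct (@disc_hom_choice S (sub (inD Delta (A:=acar A)))
             (fun x a b => p x (proj2_sig b) (proj1_sig b) = phi x (sing M (disc S) x a)))
    as [g Hg].
  { intros x a; destruct (ps x (HS x a) (phi x (sing M (disc S) x a))) as [b Hb].
    exists (exist _ b (HS x a)); exact Hb. }
  set (phi' := free_ext_hom A (hcomp g (Defs.incl _))).
  assert (Hlift : forall x (hx : In x Delta) u, p x hx (phi' x u) = phi x u).
  { intros x hx u; unfold phi', free_ext_hom; simpl.
    rewrite Mf_hcomp, pm, <- !Mf_hcomp, (free_morph_letters phim).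
    f_equal; apply Mf_ext; intros y a; apply Hg. }
  exists phi'; split; [apply free_ext_hom_morph|].
  exists (fun a => P (p _ HK a)); split.
  - intros a b Hab; apply Pup, mono, Hab.
  - intro s; rewrite HP, Hlift; reflexivity.
Qed.

Lemma sortwise_finite_factor {F Q B : SPos Xi} {q : Hom F Q} {r : Hom F B} :
  surjectiveH q -> surjectiveH r -> (forall x s t, q x s = q x t -> r x s = r x t) ->
  sortwise_finite Q -> sortwise_finite B.
Proof.
  intros qs rs Hker Qfin x.
  destruct (Qfin x) as [lq Hlq].
  exists (map (fun c => r x (proj1_sig (constructive_indefinite_description _ (qs x c)))) lq).
  intro b; destruct (rs x b) as [s <-].
  apply in_map_iff; exists (q x s); split; [|apply Hlq].
  apply Hker, (proj2_sig (constructive_indefinite_description _ (qs x (q x s)))).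
Qed.

Section Quotient.
Variables (A : Alg M) (Q : SPos Xi) (q : Hom (acar A) Q).
Hypothesis q_surj : surjectiveH q.
Hypothesis q_cong : forall x (s t : Mo M (acar A) x),
  le (Mf M q x s) (Mf M q x t) -> le (q x (act A x s)) (q x (act A x t)).

Let Mq_surj := M_surj (m := M) q_surj.

Definition quot_act_fun x (u : Mo M Q x) : Q x :=
  q x (act A x (proj1_sig (constructive_indefinite_description _ (Mq_surj x u)))).

Lemma quot_act_fun_mono x (u v : Mo M Q x) : le u v -> le (quot_act_fun x u) (quot_act_fun x v).
Proof.
  intro Huv; unfold quot_act_fun.
  destruct (constructive_indefinite_description _ (Mq_surj x u)) as [s Hs].
  destruct (constructive_indefinite_description _ (Mq_surj x v)) as [t Ht]; simpl.
  apply q_cong; rewrite Hs, Ht; exact Huv.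
Qed.

Definition quot_act : Hom (Mo M Q) Q := Build_Hom quot_act_fun_mono.

Lemma quot_act_morph : is_morph (act A) quot_act q.
Proof.
  intros x s; simpl; unfold quot_act_fun.
  destruct (constructive_indefinite_description _ (Mq_surj x (Mf M q x s))) as [t Ht]; simpl.
  apply le_antisym; apply q_cong; rewrite Ht; apply le_refl.
Qed.

Lemma quot_act_sing x (a : Q x) : quot_act x (sing M Q x a) = a.
Proof.
  destruct (q_surj x a) as [s <-].
  rewrite <- sing_nat, <- quot_act_morph; f_equal; apply act_sing.
Qed.

Lemma quot_act_flat x (U : Mo M (Mo M Q) x) :
  quot_act x (Mf M quot_act x U) = quot_act x (flat M Q x U).
Proof.
  destruct (M_surj Mq_surj U) as [V <-].
  rewrite <- flat_nat, <- quot_act_morph, <- Mf_hcomp.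
  assert (Hcomp : forall y s, hcomp (Mf M q) quot_act y s = hcomp (act A) q y s)
    by (intros y s; symmetry; apply quot_act_morph).
  rewrite (Mf_ext Hcomp).
  rewrite Mf_hcomp, <- quot_act_morph, act_flat; reflexivity.
Qed.

Definition quot_alg : Alg M := Build_Alg quot_act_flat quot_act_sing.

End Quotient.

Lemma plug_box {S : Alphabet Xi} {xi} (s : free M S xi) :
  plug (sing M (SBox S xi) xi (inr eq_refl)) s = s.
Proof. unfold plug; rewrite sing_nat; apply flat_sing. Qed.

Lemma synle_mem {S : Alphabet Xi} {xi} {L : free M S xi -> Prop} {s t : free M S xi} :
  synle (existT _ xi L) s t -> L s -> L t.
Proof.
  intros Hst Hs; rewrite <- (plug_box t); apply Hst; rewrite plug_box; exact Hs.
Qed.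

Lemma is_syntactic_algebra_recognises {S : Alphabet Xi} {K : lang M S} {A : Alg M} :
  is_syntactic_algebra K A -> recognises A K.
Proof.
  destruct K as [xi L]; intros [q [qm [qs qiff]]].
  exists q; split; [exact qm|].
  exists (fun c => exists s, q xi s = c /\ L s); split.
  - intros a b Hab [s [<- Hs]].
    destruct (qs xi b) as [t <-].
    exists t; split; [reflexivity|].
    apply qiff in Hab; exact (synle_mem Hab Hs).
  - intro t; split; [intro Ht; exists t; auto|].
    intros [s [Hst Hs]].
    apply (synle_mem (s := s)); [apply qiff; rewrite Hst; apply le_refl|exact Hs].
Qed.

Lemma syntactic_algebra_exists {S : Alphabet Xi} {K : lang M S} :
  has_syntactic_algebra K -> exists A : Alg M, is_syntactic_algebra K A.
Proof.
  intros [Q [q [qs [qiff [_ qcong]]]]].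
  assert (Hcong : forall x (s t : Mo M (free M S) x),
             le (Mf M q x s) (Mf M q x t) ->
             le (q x (act (free_alg S) x s)) (q x (act (free_alg S) x t))).
  { intros x s t H; apply qiff, qcong, H. }
  exists (quot_alg (free_alg S) Q q qs Hcong), q.
  split; [|split; [exact qs|exact qiff]].
  exact (quot_act_morph (free_alg S) Q q qs Hcong).
Qed.

End Algebra.

Section Variety.
Context {Xi : Type} {M : Monad Xi}.
Variable KK : forall S : Alphabet Xi, lang M S -> Prop.
Hypothesis HV : lang_variety KK.

Lemma KK_ext {S : Alphabet Xi} {xi} {K1 K2 : free M S xi -> Prop} :
  KK S (existT _ xi K1) -> (forall s, K1 s <-> K2 s) -> KK S (existT _ xi K2).
Proof.
  intros HK E.
  replace K2 with K1; [exact HK|].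
  apply functional_extensionality; intro s; apply propositional_extensionality, E.
Qed.

Lemma KK_big_union {S : Alphabet Xi} {xi} {I : Type} {F : I -> free M S xi -> Prop}
  (l : list I) :
  (forall i, KK S (existT _ xi (F i))) ->
  KK S (existT _ xi (fun s => exists i, In i l /\ F i s)).
Proof.
  destruct HV as [Hempty [_ [Hunion _]]]; intro HF.
  induction l as [|i l IH].
  - apply (KK_ext (Hempty S xi)); intro s; split; [tauto|intros [i [[] _]]].
  - apply (KK_ext (Hunion _ _ _ _ (HF i) IH)); intro s; simpl; split.
    + intros [Hi|[j [Hj Hs]]]; eauto.
    + intros [j [[<-|Hj] Hs]]; eauto.
Qed.

Lemma KK_big_inter {S : Alphabet Xi} {xi} {I : Type} {F : I -> free M S xi -> Prop}
  (l : list I) :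
  (forall i, KK S (existT _ xi (F i))) ->
  KK S (existT _ xi (fun s => forall i, In i l -> F i s)).
Proof.
  destruct HV as [_ [Hfull [_ [Hinter _]]]]; intro HF.
  induction l as [|i l IH].
  - apply (KK_ext (Hfull S xi)); intro s; split; [intros _ i []|tauto].
  - apply (KK_ext (Hinter _ _ _ _ (HF i) IH)); intro s; simpl; split.
    + intros [Hi Hl] j [<-|Hj]; auto.
    + intro H; split; auto.
Qed.

Lemma KK_preim_upclosed {S : Alphabet Xi} {xi} {B : SPos Xi} (f : free M S xi -> B xi)
  (lb : list (B xi)) (P : B xi -> Prop) :
  (forall b, In b lb) -> (forall a b, le a b -> P a -> P b) ->
  (forall b, KK S (existT _ xi (fun s => le b (f s)))) ->
  KK S (existT _ xi (fun s => P (f s))).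
Proof.
  intros Hlb Pup Hup.
  assert (HF : forall b, KK S (existT _ xi (fun s => P b /\ le b (f s)))).
  { intro b; destruct HV as [Hempty _]; destruct (classic (P b)) as [Pb|nPb].
    - apply (KK_ext (Hup b)); tauto.
    - apply (KK_ext (Hempty S xi)); tauto. }
  apply (KK_ext (KK_big_union lb HF)); intro s; split.
  - intros [b [_ [Pb Hb]]]; exact (Pup _ _ Hb Pb).
  - intro Ps; exists (f s); split; [apply Hlb|split; [exact Ps|apply le_refl]].
Qed.

Section SyntacticUpsets.
Context {S : Alphabet Xi} {xi' : Xi} {L : free M S xi' -> Prop}.
Hypothesis HL : KK S (existT _ xi' L).
Context {B : SPos Xi} {q : Hom (free M S) B}.
Hypothesis q_surj : surjectiveH q.
Hypothesis q_synle : forall x s t, le (q x s) (q x t) <-> synle (existT _ xi' L) s t.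

(* A context witnessing [~ t0 <=_L t1] yields a derivative of [L] containing the
   upset of [q t0] and missing the whole class [q t1]. *)
Lemma KK_syn_separate {xi} (t0 : free M S xi) (c : B xi) :
  exists G, KK S (existT _ xi G) /\
    (forall t, le (q xi t0) (q xi t) -> G t) /\
    (~ le (q xi t0) c -> forall t, q xi t = c -> ~ G t).
Proof.
  destruct HV as [_ [Hfull [_ [_ [_ Hder]]]]].
  destruct (classic (le (q xi t0) c)) as [Hc|Hc].
  - exists (fun _ => True); split; [apply Hfull|split; [auto|contradiction]].
  - destruct (q_surj xi c) as [t1 <-].
    assert (Hns : ~ synle (existT _ xi' L) t0 t1) by (rewrite <- q_synle; exact Hc).
    apply not_all_ex_not in Hns; destruct Hns as [p Hp].
    apply imply_to_and in Hp; destruct Hp as [Hp0 Hp1].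
    exists (fun t => L (plug p t)); split; [exact (Hder _ _ _ _ p HL)|split].
    + intros t Ht; apply q_synle in Ht; exact (Ht p Hp0).
    + intros _ t Ht Hpt; apply Hp1.
      assert (Htt1 : synle (existT _ xi' L) t t1) by (apply q_synle; rewrite Ht; apply le_refl).
      exact (Htt1 p Hpt).
Qed.

Lemma KK_syn_upset {xi} (t0 : free M S xi) (lb : list (B xi)) :
  (forall b, In b lb) -> KK S (existT _ xi (fun t => le (q xi t0) (q xi t))).
Proof.
  intro Hlb.
  set (G := fun c => proj1_sig (constructive_indefinite_description _ (KK_syn_separate t0 c))).
  assert (HG := fun c => proj2_sig (constructive_indefinite_description _ (KK_syn_separate t0 c))).
  fold G in HG.
  apply (KK_ext (KK_big_inter lb (fun c => proj1 (HG c)))); intro t; split.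
  - intro HGt; destruct (classic (le (q xi t0) (q xi t))) as [H|H]; [exact H|].
    exfalso; exact (proj2 (proj2 (HG (q xi t))) H t eq_refl (HGt _ (Hlb _))).
  - intros H c _; exact (proj1 (proj2 (HG c)) t H).
Qed.

End SyntacticUpsets.

Definition recognised_in_KK (A : Alg M) : Prop :=
  forall S (K : lang M S), recognises A K -> KK S K.

Definition KK_pv (A : Alg M) : Prop := finitary A /\ recognised_in_KK A.

Lemma syntactic_algebra_KK_pv {S' : Alphabet Xi} {K' : lang M S'} {B : Alg M} :
  KK S' K' -> has_syntactic_algebra K' -> is_syntactic_algebra K' B -> KK_pv B.
Proof.
  destruct K' as [xi' L']; intros HK [Q [q [qs [qiff [Qfin _]]]]] [qB [qBm [qBs qBiff]]].
  assert (finB : sortwise_finite (acar B)).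
  { apply (sortwise_finite_factor qs qBs); [|exact Qfin].
    intros x s t Hst; apply le_antisym; apply qBiff, qiff; rewrite Hst; apply le_refl. }
  split; [split; [exact finB|exact (finitely_generated_free_surj qBm qBs)]|].
  intros S [xi K] [phi [phim [P [Pup HP]]]].
  destruct (free_lift_surj (A := free_alg (M := M) S') phim qBm qBs) as [phi' [phi'm Hphi']].
  destruct (finB xi) as [lb Hlb].
  assert (HPq : KK S' (existT _ xi (fun t => P (qB xi t)))).
  { apply (KK_preim_upclosed _ lb P Hlb Pup); intro b.
    destruct (qBs xi b) as [t0 <-]; exact (KK_syn_upset HK qBs qBiff t0 lb Hlb). }
  destruct HV as [_ [_ [_ [_ [Hinv _]]]]].
  apply (KK_ext (Hinv S S' phi' phi'm xi _ HPq)); intro s; simpl.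
  rewrite Hphi', HP; reflexivity.
Qed.

Lemma KK_pv_quotient (A B : Alg M) : KK_pv A -> finitary B -> is_quotient B A -> KK_pv B.
Proof.
  intros [_ HA] finB HBA; split; [exact finB|].
  intros S K HK; apply HA, (recognises_quotient HBA HK).
Qed.

Lemma KK_pv_sub_of_finite_product (I : Type) (l : list I) (F : I -> Alg M) (B : Alg M) :
  (forall i, In i l) -> (forall i, KK_pv (F i)) -> finitary B ->
  sub_of_finite_product F B -> KK_pv B.
Proof.
  intros Hl HF finB [h [hm hemb]]; split; [exact finB|].
  intros S [xi K] [phi [phim [P [Pup HP]]]].
  destruct (proj1 finB xi) as [lb Hlb].
  apply (KK_ext (K1 := fun s => P (phi xi s))); [|intro s; symmetry; apply HP].
  apply (KK_preim_upclosed (phi xi) lb P Hlb Pup); intro b.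
  assert (Hi : forall i, KK S (existT _ xi (fun s => le (h i xi b) (h i xi (phi xi s))))).
  { intro i; apply (proj2 (HF i)); exists (hcomp phi (h i)); split.
    - apply (is_morph_hcomp _ (act B)); [exact phim|apply hm].
    - exists (fun c => le (h i xi b) c); split; [intros a c H1 H2; exact (le_trans H2 H1)|].
      intro s; reflexivity. }
  apply (KK_ext (KK_big_inter l Hi)); intro s; split.
  - intro H; apply hemb; intro i; apply H, Hl.
  - intros H i _; apply (hmono (h i) H).
Qed.

Lemma KK_pv_sort_accumulation (B : Alg M) :
  finitary B -> sort_accumulation_point KK_pv B -> KK_pv B.
Proof.
  intros finB Hacc; split; [exact finB|].
  intros S K HK.
  destruct (afin S) as [ls Hls].
  destruct (Hacc (projT1 K :: map (@projT1 _ _) ls)) as [A [[_ HA] HBA]].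
  apply HA; revert HBA HK; apply recognises_restr_quotient; [left; reflexivity|].
  intros x a; right; apply in_map_iff; exists (existT _ x a); auto.
Qed.

Lemma pseudo_variety_KK_pv : pseudo_variety KK_pv.
Proof.
  split; [intros A [finA _]; exact finA|].
  split; [exact KK_pv_quotient|].
  split; [exact KK_pv_sub_of_finite_product|exact KK_pv_sort_accumulation].
Qed.

End Variety.

Theorem theorem5p9 (Xi : Type) (M : Monad Xi)
  (KK : forall S : Alphabet Xi, lang M S -> Prop) :
  lang_variety KK ->
  (forall (S : Alphabet Xi) (K : lang M S), KK S K -> has_syntactic_algebra K) ->
  forall (S : Alphabet Xi) (K : lang M S),
    KK S K <->
    exists A : Alg M,
      in_generated_pv
        (fun B => exists (S' : Alphabet Xi) (K' : lang M S'), KK S' K' /\ is_syntactic_algebra K' B)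
        A /\
      recognises A K.
Proof.
  intros HV Hsyn S K; split.
  - intro HK; destruct (syntactic_algebra_exists (Hsyn S K HK)) as [A HA].
    exists A; split; [|exact (is_syntactic_algebra_recognises HA)].
    intros C _ HC; apply HC; exists S, K; auto.
  - intros [A [HA HK]].
    assert (HApv : KK_pv KK A).
    { apply HA; [exact (pseudo_variety_KK_pv KK HV)|].
      intros B [S' [K' [HK' HB]]]; exact (syntactic_algebra_KK_pv KK HV HK' (Hsyn _ _ HK') HB). }
    exact (proj2 HApv S K HK).
Qed.
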